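(* Let $N=\{1,\dots,n\}$ and $C:2^N\to\mathbb{R}_{\ge0}$. If $\psi\in\mathbb{R}^n$ is in the core of $C$, i.e. $\sum_{i\in N}\psi_i=C(N)$ and $\sum_{i\in S}\psi_i\le C(S)$ for all $S\subseteq N$, then $\|\psi\|_1\le2\max_{S\subseteq N}|C(S)|$. *)

From mathcomp Require Import all_boot all_order all_algebra.
Set Implicit Arguments. Unset Strict Implicit. Unset Printing Implicit Defensive.
Import Order.TTheory GRing.Theory Num.Theory.
Local Open Scope ring_scope.

Definition in_core (R : numDomainType) (n : nat) (C : {set 'I_n} -> R)
  (psi : 'I_n -> R) : Prop :=
  \sum_(i < n) psi i = C [set: 'I_n] /\
  forall S : {set 'I_n}, \sum_(i in S) psi i <= C S.

From mathcomp Require Import all_boot all_order all_algebra.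

Set Implicit Arguments.
Unset Strict Implicit.
Unset Printing Implicit Defensive.

Import Order.TTheory GRing.Theory Num.Theory.
Local Open Scope ring_scope.

(* Split the indices by the sign of psi: with P the set of nonnegative
   coordinates, ||psi||_1 = 2 psi(P) - psi(N) <= 2 C(P) - C(N) <= 2 C(P). *)

Lemma sum_norm_nonnegE (R : realDomainType) (I : finType) (f : I -> R) :
  \sum_i `|f i| = 2 * \sum_(i | 0 <= f i) f i - \sum_i f i.
Proof.
rewrite [\sum_i `|f i|](bigID (fun i => 0 <= f i)) /=.
rewrite [\sum_i f i](bigID (fun i => 0 <= f i)) /=.
have -> : \sum_(i | 0 <= f i) `|f i| = \sum_(i | 0 <= f i) f i.
  by apply: eq_bigr => i /ger0_norm.
have -> : \sum_(i | ~~ (0 <= f i)) `|f i| = - \sum_(i | ~~ (0 <= f i)) f i.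
  by rewrite -sumrN; apply: eq_bigr => i; rewrite -ltNge => /ltr0_norm.
by rewrite mulr2n mulrDl mul1r opprD addrACA subrr add0r.
Qed.

Lemma core_sum_norm_le (R : realDomainType) (n : nat) (C : {set 'I_n} -> R)
    (psi : 'I_n -> R) :
  in_core C psi ->
  \sum_i `|psi i| <= 2 * C [set i | 0 <= psi i] - C [set: 'I_n].
Proof.
move=> [<- le_psi_C]; rewrite sum_norm_nonnegE lerD2r ler_pM2l //.
by have := le_psi_C [set i | 0 <= psi i]; under eq_bigl do rewrite inE.
Qed.

Theorem lemma2 (R : realFieldType) (n : nat) (C : {set 'I_n} -> R)
  (psi : 'I_n -> R) :
  (forall S, 0 <= C S) ->
  in_core C psi ->
  \sum_(i < n) `|psi i| <= 2 * \big[Num.max/0]_(S : {set 'I_n}) `|C S|.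
Proof.
move=> C_ge0 psi_core; set P := [set i | 0 <= psi i].
apply: le_trans (core_sum_norm_le psi_core) _.
rewrite lerBlDr; apply: ler_wpDr (C_ge0 _) _; rewrite ler_pM2l //.
exact: le_trans (ler_norm _) (le_bigmax _ _ P).
Qed.
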